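(* Let $n\ge1$, $t_1<\dots<t_n$, $p_0,\dots,p_n>0$, $q_k=p_k^{-1/2}$, and let $a_k^\pm,b_k^\pm$ ($0\le k\le n$) be the connection coefficients defined in the context. Then: (i) For $z\in\mathbb{C}\setminus(-\infty,0]$ and all $1\le k\le n-1$, $$\frac{a_0^+(z)}{q_0}=\frac{1}{q_k}\big(a_k^+(z)b_k^-(z)-a_k^-(z)b_k^+(z)\big)=\frac{b_n^-(z)}{q_n}.$$ (ii) For $\lambda\in(0,\infty)$ and all $0\le k\le n$, $$q_0\big(|b_k^-(\lambda)|^2-|a_k^-(\lambda)|^2\big)=q_n\big(|a_k^+(\lambda)|^2-|b_k^+(\lambda)|^2\big)=q_k,$$ and consequently $$\frac{|a_k^+(\lambda)|^2}{q_0}+\frac{|a_k^-(\lambda)|^2}{q_n}=\frac{|b_k^+(\lambda)|^2}{q_0}+\frac{|b_k^-(\lambda)|^2}{q_n}.$$ (iii) For $\lambda\in(0,\infty)$ and all $1\le k\le n-1$, $$\frac{b_0^+(\lambda)}{q_0}=\frac{1}{q_k}\Big(b_k^+(\lambda)\overline{b_k^-(\lambda)}-a_k^+(\lambda)\overline{a_k^-(\lambda)}\Big)=-\frac{\overline{a_n^-(\lambda)}}{q_n}.$$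
   Context: For $z\in\mathbb{C}\setminus(-\infty,0]$, $\sqrt z$ is the principal square root. For $1\le k\le n$ let $$L_k(z)=\frac12\begin{bmatrix}\left(1+\frac{q_k}{q_{k-1}}\right)e^{it_k(q_{k-1}-q_k)\sqrt z} & \left(1-\frac{q_k}{q_{k-1}}\right)e^{-it_k(q_{k-1}+q_k)\sqrt z}\\ \left(1-\frac{q_k}{q_{k-1}}\right)e^{it_k(q_{k-1}+q_k)\sqrt z} & \left(1+\frac{q_k}{q_{k-1}}\right)e^{-it_k(q_{k-1}-q_k)\sqrt z}\end{bmatrix},\qquad R_k(z)=L_k(z)^{-1}.$$ The connection coefficients are defined by $a_n^+=1$, $b_n^+=0$, $(a_l^+,b_l^+)^T=R_{l+1}(z)(a_{l+1}^+,b_{l+1}^+)^T$ for $l=n-1,\dots,0$; and $a_0^-=0$, $b_0^-=1$, $(a_j^-,b_j^-)^T=L_j(z)(a_{j-1}^-,b_{j-1}^-)^T$ for $j=1,\dots,n$. *)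

From Stdlib Require Import Reals Lra.
From Coquelicot Require Import Coquelicot.
Open Scope R_scope.

Definition Cexp (z : C) : C :=
  (exp (Re z) * cos (Im z), exp (Re z) * sin (Im z)).

(* Principal square root (branch cut on (-oo,0], Re >= 0):
   sqrt z = sqrt((|z|+Re z)/2) + i sgn(Im z) sqrt((|z|-Re z)/2),
   with sgn(Im z) taken as +1 when Im z >= 0. *)
Definition Csqrt (z : C) : C :=
  (sqrt ((Cmod z + Re z) / 2),
   (if Rlt_dec (Im z) 0 then -1 else 1) * sqrt ((Cmod z - Re z) / 2)).

Definition not_neg_real (z : C) : Prop := ~ (Im z = 0 /\ Re z <= 0).

Record mat2 := Mat2 { m11 : C; m12 : C; m21 : C; m22 : C }.
Definition mat2_apply (M : mat2) (v : C * C) : C * C :=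
  ((m11 M * fst v + m12 M * snd v)%C, (m21 M * fst v + m22 M * snd v)%C).
Definition mat2_det (M : mat2) : C := (m11 M * m22 M - m12 M * m21 M)%C.
Definition mat2_inv (M : mat2) : mat2 :=
  let d := mat2_det M in
  Mat2 (m22 M / d)%C (- m12 M / d)%C (- m21 M / d)%C (m11 M / d)%C.

Definition Ci : C := (0, 1).

Definition qq (p : nat -> R) (k : nat) : R := / sqrt (p k).

Definition Lmat (t p : nat -> R) (k : nat) (z : C) : mat2 :=
  let qk1 := qq p (k - 1) in
  let qk := qq p k in
  let r := qk / qk1 in
  let s := Csqrt z in
  Mat2 (/2 * (1 + r) * Cexp (Ci * t k * (qk1 - qk) * s))%C
       (/2 * (1 - r) * Cexp (- Ci * t k * (qk1 + qk) * s))%C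
       (/2 * (1 - r) * Cexp (Ci * t k * (qk1 + qk) * s))%C
       (/2 * (1 + r) * Cexp (- Ci * t k * (qk1 - qk) * s))%C.

Definition Rmat (t p : nat -> R) (k : nat) (z : C) : mat2 :=
  mat2_inv (Lmat t p k z).

(* plus_vec n m = (a_{n-m}^+, b_{n-m}^+) for m <= n *)
Fixpoint plus_vec (t p : nat -> R) (n : nat) (z : C) (m : nat) : C * C :=
  match m with
  | O => (RtoC 1, RtoC 0)
  | S m' => mat2_apply (Rmat t p (n - m') z) (plus_vec t p n z m')
  end.

Fixpoint minus_vec (t p : nat -> R) (z : C) (j : nat) : C * C :=
  match j with
  | O => (RtoC 0, RtoC 1)
  | S j' => mat2_apply (Lmat t p j z) (minus_vec t p z j')
  end.

Definition a_plus (t p : nat -> R) (n : nat) (z : C) (l : nat) : C :=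
  fst (plus_vec t p n z (n - l)).
Definition b_plus (t p : nat -> R) (n : nat) (z : C) (l : nat) : C :=
  snd (plus_vec t p n z (n - l)).
Definition a_minus (t p : nat -> R) (z : C) (j : nat) : C :=
  fst (minus_vec t p z j).
Definition b_minus (t p : nat -> R) (z : C) (j : nat) : C :=
  snd (minus_vec t p z j).

From Pilot Require Import Defs.
From Stdlib Require Import Reals Lra Lia.
From Coquelicot Require Import Coquelicot.
Open Scope R_scope.

(* Both connection vectors v_k^- = (a_k^-, b_k^-) and v_k^+ = (a_k^+, b_k^+) solve
   v_k = L_k v_(k-1), and det L_k = q_k / q_(k-1).  The Wronskian u1 v2 - v1 u2 of two
   solutions is multiplied by det L_k at each step, so Wronskian / q_k does not depend
   on k.  For z = lam > 0 the matrix L_k has the form [[a, b], [conj b, conj a]], which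
   multiplies the indefinite Hermitian form u2 conj(v2) - u1 conj(v1) by
   |a|^2 - |b|^2 = det L_k; so this form divided by q_k is conserved as well.
   Evaluating the conserved quantities at k = 0, where v^- = (0, 1), and at k = n,
   where v^+ = (1, 0), gives (i)-(iii). *)

Lemma Cexp_add (w1 w2 : C) : Cexp (w1 + w2) = (Cexp w1 * Cexp w2)%C.
Proof.
  destruct w1 as [x1 y1], w2 as [x2 y2]; unfold Cexp, Cmult; cbn.
  rewrite exp_plus, cos_plus, sin_plus. f_equal; ring.
Qed.

Lemma Cexp_0 : Cexp 0 = 1%C.
Proof. unfold Cexp; apply injective_projections; cbn; rewrite exp_0, ?cos_0, ?sin_0; ring. Qed.

Lemma Cexp_opp_r (w : C) : (Cexp w * Cexp (- w))%C = 1%C.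
Proof. rewrite <- Cexp_add, Cplus_opp_r. exact Cexp_0. Qed.

Lemma Cconj_Cexp (w : C) : Cconj (Cexp w) = Cexp (Cconj w).
Proof.
  destruct w as [x y]; unfold Cexp, Cconj; cbn.
  rewrite cos_neg, sin_neg. f_equal; ring.
Qed.

Lemma Cconj_RtoC (x : R) : Cconj (RtoC x) = RtoC x.
Proof. apply injective_projections; cbn; ring. Qed.

Lemma RtoC_neq_0 (x : R) : x <> 0 -> RtoC x <> 0%C.
Proof. intros Hx E. exact (Hx (RtoC_inj _ _ E)). Qed.

Lemma RtoC_div_inj (x a y b : R) : a <> 0 -> b <> 0 ->
  (RtoC x / RtoC a = RtoC y / RtoC b)%C -> x / a = y / b.
Proof. intros Ha Hb H. apply RtoC_inj. rewrite !RtoC_div by assumption. exact H. Qed.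

Definition wronskian (u v : C * C) : C := (fst u * snd v - fst v * snd u)%C.

Definition Jinner (u v : C * C) : C :=
  (snd u * Cconj (snd v) - fst u * Cconj (fst v))%C.

Definition conj_symmetric (M : mat2) : Prop :=
  m22 M = Cconj (m11 M) /\ m21 M = Cconj (m12 M).

Lemma wronskian_apply (M : mat2) (u v : C * C) :
  wronskian (mat2_apply M u) (mat2_apply M v) = (mat2_det M * wronskian u v)%C.
Proof. destruct M, u, v; unfold wronskian, mat2_apply, mat2_det; cbn; ring. Qed.

Lemma Jinner_apply (M : mat2) (u v : C * C) : conj_symmetric M ->
  Jinner (mat2_apply M u) (mat2_apply M v) = (mat2_det M * Jinner u v)%C.
Proof.
  destruct M as [a b c d], u, v; intros [Hd Hc]; cbn in Hd, Hc; subst c d.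
  unfold Jinner, mat2_apply, mat2_det; cbn.
  rewrite !Cplus_conj, !Cmult_conj, !Cconj_conj. ring.
Qed.

Definition Jnorm (v : C * C) : R := Cmod (snd v) ^ 2 - Cmod (fst v) ^ 2.

Lemma Jinner_diag (v : C * C) : Jinner v v = RtoC (Jnorm v).
Proof. unfold Jinner, Jnorm. rewrite RtoC_minus, !Cmod2_conj. reflexivity. Qed.

Lemma mat2_apply_inv (M : mat2) (v : C * C) : mat2_det M <> 0%C ->
  mat2_apply M (mat2_apply (mat2_inv M) v) = v.
Proof.
  destruct M, v; unfold mat2_apply, mat2_inv, mat2_det; cbn.
  intros H. f_equal; field; exact H.
Qed.

Definition transfer_mx (c d : R) (w1 w2 : C) : mat2 :=
  Mat2 (c * Cexp w1) (d * Cexp (- w2)) (d * Cexp w2) (c * Cexp (- w1)).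

Lemma transfer_mx_det c d w1 w2 : mat2_det (transfer_mx c d w1 w2) = RtoC (c ^ 2 - d ^ 2).
Proof.
  unfold mat2_det, transfer_mx; cbn [m11 m12 m21 m22].
  transitivity (c * c * (Cexp w1 * Cexp (- w1)) - d * d * (Cexp w2 * Cexp (- w2)))%C.
  { ring. }
  rewrite !Cexp_opp_r, RtoC_minus, !RtoC_pow. ring.
Qed.

Lemma transfer_mx_conj_symmetric c d w1 w2 :
  Cconj w1 = (- w1)%C -> Cconj w2 = (- w2)%C -> conj_symmetric (transfer_mx c d w1 w2).
Proof.
  intros H1 H2; unfold transfer_mx; split; cbn [m11 m12 m21 m22];
    rewrite Cmult_conj, Cconj_Cexp, Cconj_RtoC, ?Copp_conj, ?H1, ?H2;
    do 2 f_equal; ring.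
Qed.

Lemma Csqrt_R (lam : R) : 0 <= lam -> Csqrt (RtoC lam) = RtoC (sqrt lam).
Proof.
  intros Hlam. unfold Csqrt.
  rewrite re_RtoC, im_RtoC, Cmod_R, Rabs_pos_eq by exact Hlam.
  replace ((lam + lam) / 2) with lam by field.
  replace ((lam - lam) / 2) with 0 by field.
  rewrite sqrt_0, Rmult_0_r. reflexivity.
Qed.

Section Transfer.

Variables (t p : nat -> R).

Lemma Lmat_transfer_mx k z :
  Lmat t p k z =
  transfer_mx (/ 2 * (1 + qq p k / qq p (k - 1))) (/ 2 * (1 - qq p k / qq p (k - 1)))
    (Defs.Ci * t k * (qq p (k - 1) - qq p k) * Csqrt z)
    (Defs.Ci * t k * (qq p (k - 1) + qq p k) * Csqrt z).
Proof.
  unfold Lmat, transfer_mx. set (r := qq p k / qq p (k - 1)).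
  rewrite !RtoC_mult, RtoC_plus, RtoC_minus, RtoC_inv by lra.
  repeat f_equal; ring.
Qed.

Lemma Lmat_det k z : mat2_det (Lmat t p k z) = RtoC (qq p k / qq p (k - 1)).
Proof.
  rewrite Lmat_transfer_mx, transfer_mx_det. set (r := qq p k / qq p (k - 1)).
  f_equal. field.
Qed.

Lemma Lmat_conj_symmetric k (lam : R) : 0 <= lam -> conj_symmetric (Lmat t p k lam).
Proof.
  intros Hlam. rewrite Lmat_transfer_mx, Csqrt_R by exact Hlam.
  apply transfer_mx_conj_symmetric; apply injective_projections; cbn; ring.
Qed.

End Transfer.

Section Solutions.

Variables (t p : nat -> R) (n : nat).
Hypothesis p_pos : forall k, (k <= n)%nat -> 0 < p k.

Definition solves_transfer (z : C) (u : nat -> C * C) : Prop :=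
  forall k, (k < n)%nat -> u (S k) = mat2_apply (Lmat t p (S k) z) (u k).

Definition transfer_covariant (B : C * C -> C * C -> C) (z : C) : Prop :=
  forall k x y, B (mat2_apply (Lmat t p k z) x) (mat2_apply (Lmat t p k z) y)
                = (RtoC (qq p k / qq p (k - 1)) * B x y)%C.

Lemma qq_pos k : (k <= n)%nat -> 0 < qq p k.
Proof. intros Hk. apply Rinv_0_lt_compat, sqrt_lt_R0, p_pos, Hk. Qed.

Lemma qq_neq0 k : (k <= n)%nat -> qq p k <> 0.
Proof. intros Hk. apply Rgt_not_eq, qq_pos, Hk. Qed.

Lemma minus_vec_solution z : solves_transfer z (minus_vec t p z).
Proof. intros k _. reflexivity. Qed.

Lemma plus_vec_solution z : solves_transfer z (fun l => plus_vec t p n z (n - l)).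
Proof.
  intros k Hk.
  replace (n - k)%nat with (S (n - S k)) by lia. cbn [plus_vec].
  replace (n - (n - S k))%nat with (S k) by lia.
  unfold Rmat. rewrite mat2_apply_inv; [reflexivity|].
  rewrite Lmat_det. replace (S k - 1)%nat with k by lia.
  apply RtoC_neq_0, Rgt_not_eq, Rdiv_lt_0_compat; apply qq_pos; lia.
Qed.

Lemma wronskian_covariant z : transfer_covariant wronskian z.
Proof. intros k x y. rewrite wronskian_apply, Lmat_det. reflexivity. Qed.

Lemma Jinner_covariant (lam : R) : 0 <= lam -> transfer_covariant Jinner lam.
Proof.
  intros Hlam k x y. rewrite Jinner_apply, Lmat_det by (apply Lmat_conj_symmetric, Hlam).
  reflexivity.
Qed.

Section Conservation.

Variables (B : C * C -> C * C -> C) (z : C) (u v : nat -> C * C).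
Hypotheses (HB : transfer_covariant B z) (Hu : solves_transfer z u) (Hv : solves_transfer z v).

Lemma form_div_qq_const k : (k <= n)%nat ->
  (B (u k) (v k) / qq p k = B (u 0%nat) (v 0%nat) / qq p 0)%C.
Proof.
  induction k as [|k IH]; intros Hk; [reflexivity|].
  rewrite Hu, Hv, HB by lia. rewrite <- IH by lia.
  replace (S k - 1)%nat with k by lia.
  assert (Hk0 := qq_neq0 k ltac:(lia)). assert (Hk1 := qq_neq0 (S k) Hk).
  rewrite RtoC_div by exact Hk0.
  field. split; apply RtoC_neq_0; assumption.
Qed.

Lemma form_conservation k : (k <= n)%nat ->
  (B (u 0%nat) (v 0%nat) / qq p 0 = B (u k) (v k) / qq p k)%C /\
  (B (u k) (v k) / qq p k = B (u n) (v n) / qq p n)%C.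
Proof.
  intros Hk. rewrite (form_div_qq_const k), (form_div_qq_const n) by lia.
  split; reflexivity.
Qed.

End Conservation.

Lemma wronskian_identity z k : (k <= n)%nat ->
  (a_plus t p n z 0 / qq p 0 =
     (a_plus t p n z k * b_minus t p z k - a_minus t p z k * b_plus t p n z k) / qq p k)%C /\
  ((a_plus t p n z k * b_minus t p z k - a_minus t p z k * b_plus t p n z k) / qq p k =
     b_minus t p z n / qq p n)%C.
Proof.
  intros Hk.
  pose proof (form_conservation wronskian z _ _ (wronskian_covariant z)
                (plus_vec_solution z) (minus_vec_solution z) k Hk) as [H0 Hn].
  unfold wronskian, a_plus, b_plus, a_minus, b_minus in *.
  rewrite Nat.sub_0_r, Nat.sub_diag in *; cbn [fst snd plus_vec minus_vec] in *.
  split.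
  - rewrite <- H0. f_equal. ring.
  - rewrite Hn. f_equal. ring.
Qed.

Lemma Jinner_identity (lam : R) k : 0 <= lam -> (k <= n)%nat ->
  (b_plus t p n lam 0 / qq p 0 =
     (b_plus t p n lam k * Cconj (b_minus t p lam k)
      - a_plus t p n lam k * Cconj (a_minus t p lam k)) / qq p k)%C /\
  ((b_plus t p n lam k * Cconj (b_minus t p lam k)
    - a_plus t p n lam k * Cconj (a_minus t p lam k)) / qq p k =
     - Cconj (a_minus t p lam n) / qq p n)%C.
Proof.
  intros Hlam Hk.
  pose proof (form_conservation Jinner lam _ _ (Jinner_covariant lam Hlam)
                (plus_vec_solution lam) (minus_vec_solution lam) k Hk) as [H0 Hn].
  unfold Jinner, a_plus, b_plus, a_minus, b_minus in *.
  rewrite Nat.sub_0_r, Nat.sub_diag in *; cbn [fst snd plus_vec minus_vec] in *.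
  rewrite !Cconj_RtoC in *.
  split.
  - rewrite <- H0. f_equal. ring.
  - rewrite Hn. f_equal. ring.
Qed.

Lemma Jnorm_conservation (lam : R) (u : nat -> C * C) k :
  0 <= lam -> solves_transfer lam u -> (k <= n)%nat ->
  Jnorm (u 0%nat) / qq p 0 = Jnorm (u k) / qq p k /\
  Jnorm (u k) / qq p k = Jnorm (u n) / qq p n.
Proof.
  intros Hlam Hu Hk.
  pose proof (form_conservation Jinner lam _ _ (Jinner_covariant lam Hlam) Hu Hu k Hk)
    as [H0 Hn].
  rewrite !Jinner_diag in H0, Hn.
  split; apply RtoC_div_inj; auto using qq_neq0 with arith.
Qed.

Lemma Jnorm_identity (lam : R) k : 0 <= lam -> (k <= n)%nat ->
  qq p 0 * (Cmod (b_minus t p lam k) ^ 2 - Cmod (a_minus t p lam k) ^ 2) = qq p k /\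
  qq p n * (Cmod (a_plus t p n lam k) ^ 2 - Cmod (b_plus t p n lam k) ^ 2) = qq p k /\
  Cmod (a_plus t p n lam k) ^ 2 / qq p 0 + Cmod (a_minus t p lam k) ^ 2 / qq p n =
  Cmod (b_plus t p n lam k) ^ 2 / qq p 0 + Cmod (b_minus t p lam k) ^ 2 / qq p n.
Proof.
  intros Hlam Hk.
  pose proof (Jnorm_conservation lam _ k Hlam (minus_vec_solution lam) Hk) as [Hm _].
  pose proof (Jnorm_conservation lam _ k Hlam (plus_vec_solution lam) Hk) as [_ Hp].
  unfold Jnorm, a_plus, b_plus, a_minus, b_minus in *.
  rewrite Nat.sub_diag in Hp; cbn [fst snd plus_vec minus_vec] in Hm, Hp.
  rewrite Cmod_0, Cmod_1 in Hm, Hp.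
  assert (H0 := qq_neq0 0 ltac:(lia)). assert (Hk0 := qq_neq0 k Hk).
  assert (Hn0 := qq_neq0 n ltac:(lia)).
  set (am2 := Cmod (fst (minus_vec t p lam k)) ^ 2) in *.
  set (bm2 := Cmod (snd (minus_vec t p lam k)) ^ 2) in *.
  set (ap2 := Cmod (fst (plus_vec t p n lam (n - k))) ^ 2) in *.
  set (bp2 := Cmod (snd (plus_vec t p n lam (n - k))) ^ 2) in *.
  assert (Em : qq p 0 * (bm2 - am2) = qq p k).
  { replace (bm2 - am2) with ((bm2 - am2) / qq p k * qq p k) by (field; exact Hk0).
    rewrite <- Hm. field. exact H0. }
  assert (Ep : qq p n * (ap2 - bp2) = qq p k).
  { replace (ap2 - bp2) with (- ((bp2 - ap2) / qq p k) * qq p k) by (field; exact Hk0).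
    rewrite Hp. field. exact Hn0. }
  split; [exact Em | split; [exact Ep |]].
  replace bm2 with (am2 + qq p k / qq p 0) by (rewrite <- Em; field; exact H0).
  replace ap2 with (bp2 + qq p k / qq p n) by (rewrite <- Ep; field; exact Hn0).
  field. split; assumption.
Qed.

End Solutions.

Theorem lemma3p4 (n : nat) (t p : nat -> R) :
  (1 <= n)%nat ->
  (forall k, (1 <= k)%nat -> (k < n)%nat -> t k < t (S k)) ->
  (forall k, (k <= n)%nat -> 0 < p k) ->
  let q := qq p in
  let ap := a_plus t p n in
  let bp := b_plus t p n in
  let am := a_minus t p in
  let bm := b_minus t p in
  (* (i) *)
  (forall z : C, not_neg_real z ->
     forall k, (1 <= k)%nat -> (k <= n - 1)%nat ->
       (ap z 0%nat / q 0%nat = (ap z k * bm z k - am z k * bp z k) / q k)%C /\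
       ((ap z k * bm z k - am z k * bp z k) / q k = bm z n / q n)%C) /\
  (* (ii) *)
  (forall lam : R, 0 < lam ->
     forall k, (k <= n)%nat ->
       q 0%nat * (Cmod (bm lam k) ^ 2 - Cmod (am lam k) ^ 2) = q k /\
       q n * (Cmod (ap lam k) ^ 2 - Cmod (bp lam k) ^ 2) = q k /\
       Cmod (ap lam k) ^ 2 / q 0%nat + Cmod (am lam k) ^ 2 / q n =
       Cmod (bp lam k) ^ 2 / q 0%nat + Cmod (bm lam k) ^ 2 / q n) /\
  (* (iii) *)
  (forall lam : R, 0 < lam ->
     forall k, (1 <= k)%nat -> (k <= n - 1)%nat ->
       (bp lam 0%nat / q 0%nat =
          (bp lam k * Cconj (bm lam k) - ap lam k * Cconj (am lam k)) / q k)%C /\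
       ((bp lam k * Cconj (bm lam k) - ap lam k * Cconj (am lam k)) / q k =
          - Cconj (am lam n) / q n)%C).
Proof.
  intros _ _ Hp q ap bp am bm.
  split; [|split].
  - intros z _ k _ Hk. apply wronskian_identity; [exact Hp | lia].
  - intros lam Hlam k Hk. apply Jnorm_identity; [exact Hp | lra | exact Hk].
  - intros lam Hlam k _ Hk. apply Jinner_identity; [exact Hp | lra | lia].
Qed.
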